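(* Let $p_1,\dots,p_n\ge0$ and unit vectors $\vec a_1,\dots,\vec a_n\in\mathbb{R}^3$ with $\sum_ip_i=2$, $\sum_ip_i\vec a_i=\vec0$, and suppose all $\vec a_i$ lie in a common plane through the origin (this is automatic when $n=3$). Let $f(\vec x)=\sum_ip_i\Theta(\vec x\cdot\vec a_i)$. Choose coordinates with the $z$-axis orthogonal to that plane. Then there is a rotation $R$ about the $z$-axis by an angle in $[0,\pi/2]$ such that $f(R\vec v_{s_xs_ys_z})\le1$ for all $(s_x,s_y,s_z)\in\{\pm1\}^3$.
   Context: $\Theta(x)=x$ for $x\ge0$ and $0$ for $x<0$; $\vec v_{s_xs_ys_z}=(s_x,s_y,s_z)^T$. *)

From Stdlib Require Import Reals Lra List.
Open Scope R_scope.

Definition vec3 := (R * R * R)%type.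
Definition vx (v : vec3) : R := fst (fst v).
Definition vy (v : vec3) : R := snd (fst v).
Definition vz (v : vec3) : R := snd v.

Definition dot3 (u v : vec3) : R := vx u * vx v + vy u * vy v + vz u * vz v.

Definition Theta (x : R) : R := if Rle_dec 0 x then x else 0.

Definition fsum (n : nat) (F : nat -> R) : R :=
  fold_right Rplus 0 (map F (seq 0 n)).

Definition fTheta (n : nat) (p : nat -> R) (a : nat -> vec3) (x : vec3) : R :=
  fsum n (fun i => p i * Theta (dot3 x (a i))).

Definition rotz (t : R) (v : vec3) : vec3 :=
  (cos t * vx v - sin t * vy v, sin t * vx v + cos t * vy v, vz v).

Definition sgn (b : bool) : R := if b then 1 else -1.

Definition vs (sx sy sz : bool) : vec3 := (sgn sx, sgn sy, sgn sz).

(* Since sum_i p_i a_i = 0 and Theta(y) = (y + |y|)/2, the function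
   f(x) = sum_i p_i Theta(x.a_i) equals (1/2) sum_i p_i |x.a_i|, so it is
   even and only the xy-part of x matters (the a_i lie in the plane z = 0).
   After a rotation by t, the eight cube vertices project onto the two
   diagonals +-(cos t - sin t, sin t + cos t) and +-(cos t + sin t, sin t - cos t);
   call the corresponding sums A(t) = sum p_i |u_i(t)| and B(t) = sum p_i |w_i(t)|.
   Pointwise u_i^2 + w_i^2 = 2, hence |u_i| + |w_i| <= 2 and A + B <= 2 sum p_i = 4.
   Rotating by pi/2 swaps the two diagonals, so A(pi/2) = B(0) and
   B(pi/2) = A(0); by the intermediate value theorem A(t) = B(t) for some
   t in [0, pi/2], and then A(t) = B(t) <= 2, i.e. f <= 1 on every vertex. *)

From Stdlib Require Import Reals.
From Stdlib Require Import Ranalysis Lra Lia List.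
Open Scope R_scope.

Lemma fsum_plus (n : nat) (F G : nat -> R) :
  fsum n (fun i => F i + G i) = fsum n F + fsum n G.
Proof. unfold fsum; induction (seq 0 n); simpl; lra. Qed.

Lemma fsum_scal (n : nat) (c : R) (F : nat -> R) :
  fsum n (fun i => c * F i) = c * fsum n F.
Proof. unfold fsum; induction (seq 0 n); simpl; lra. Qed.

Lemma fsum_ext (n : nat) (F G : nat -> R) :
  (forall i, (i < n)%nat -> F i = G i) -> fsum n F = fsum n G.
Proof.
  intros HFG; unfold fsum.
  assert (Hrange : forall i, In i (seq 0 n) -> (i < n)%nat)
    by (intros i Hi; apply in_seq in Hi; lia).
  induction (seq 0 n) as [|j l IH]; simpl in *; [reflexivity|].
  rewrite HFG, IH; auto.
Qed.

Lemma fsum_le (n : nat) (F G : nat -> R) :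
  (forall i, (i < n)%nat -> F i <= G i) -> fsum n F <= fsum n G.
Proof.
  intros HFG; unfold fsum.
  assert (Hrange : forall i, In i (seq 0 n) -> (i < n)%nat)
    by (intros i Hi; apply in_seq in Hi; lia).
  induction (seq 0 n) as [|j l IH]; simpl in *; [lra|].
  apply Rplus_le_compat; auto.
Qed.

Lemma fsum_continuous (n : nat) (G : nat -> R -> R) :
  (forall i, continuity (G i)) -> continuity (fun t => fsum n (fun i => G i t)).
Proof.
  intros HG; unfold fsum; induction (seq 0 n) as [|j l IH]; simpl.
  - apply continuity_const; intros x y; reflexivity.
  - exact (continuity_plus (G j) _ (HG j) IH).
Qed.

(* On the circle x^2 + y^2 = 2 the l1-norm is at most 2 (Cauchy-Schwarz). *)
Lemma abs_sum_le_of_sq_sum (x y : R) :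
  x ^ 2 + y ^ 2 = 2 -> Rabs x + Rabs y <= 2.
Proof.
  intros Hxy.
  assert (Hsq : (Rabs x + Rabs y) ^ 2 <= 4).
  { assert (Rabs x ^ 2 = x ^ 2) by apply pow2_abs.
    assert (Rabs y ^ 2 = y ^ 2) by apply pow2_abs.
    pose proof (pow2_ge_0 (Rabs x - Rabs y)); nra. }
  pose proof (Rabs_pos x); pose proof (Rabs_pos y); nra.
Qed.

Lemma Theta_abs (y : R) : Theta y = / 2 * (y + Rabs y).
Proof.
  unfold Theta; destruct (Rle_dec 0 y).
  - rewrite Rabs_right by lra; lra.
  - rewrite Rabs_left by lra; lra.
Qed.

(* For weights with vanishing first moment, the linear part of Theta
   cancels and f is half a weighted sum of absolute values. *)
Lemma fTheta_balanced (n : nat) (p : nat -> R) (a : nat -> vec3) (x : vec3) :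
  fsum n (fun i => p i * vx (a i)) = 0 ->
  fsum n (fun i => p i * vy (a i)) = 0 ->
  fsum n (fun i => p i * vz (a i)) = 0 ->
  fTheta n p a x = / 2 * fsum n (fun i => p i * Rabs (dot3 x (a i))).
Proof.
  intros Hx Hy Hz; unfold fTheta.
  rewrite (fsum_ext n _ (fun i => / 2 * (p i * Rabs (dot3 x (a i)))
      + (/ 2 * vx x * (p i * vx (a i))
         + (/ 2 * vy x * (p i * vy (a i)) + / 2 * vz x * (p i * vz (a i))))))
    by (intros i _; rewrite Theta_abs; unfold dot3; ring).
  rewrite !fsum_plus, !fsum_scal, Hx, Hy, Hz; ring.
Qed.

Definition diagU (t : R) (v : vec3) : R :=
  (cos t - sin t) * vx v + (sin t + cos t) * vy v.
Definition diagW (t : R) (v : vec3) : R :=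
  (cos t + sin t) * vx v + (sin t - cos t) * vy v.

Lemma diag_sq_sum (t : R) (v : vec3) :
  diagU t v ^ 2 + diagW t v ^ 2 = 2 * (vx v ^ 2 + vy v ^ 2).
Proof.
  pose proof (sin2_cos2 t) as Hsc; unfold Rsqr in Hsc.
  transitivity (2 * (sin t * sin t + cos t * cos t) * (vx v ^ 2 + vy v ^ 2)).
  - unfold diagU, diagW; ring.
  - rewrite Hsc; ring.
Qed.

Lemma diag_abs_sum_le (t : R) (v : vec3) :
  vz v = 0 -> dot3 v v = 1 -> Rabs (diagU t v) + Rabs (diagW t v) <= 2.
Proof.
  intros Hz Hunit; apply abs_sum_le_of_sq_sum.
  rewrite diag_sq_sum; unfold dot3 in Hunit; rewrite Hz in Hunit; lra.
Qed.

Lemma diagU_PI2 (v : vec3) : Rabs (diagU (PI / 2) v) = Rabs (diagW 0 v).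
Proof.
  unfold diagU, diagW; rewrite cos_PI2, sin_PI2, cos_0, sin_0.
  rewrite <- Rabs_Ropp; f_equal; ring.
Qed.

Lemma diagW_PI2 (v : vec3) : Rabs (diagW (PI / 2) v) = Rabs (diagU 0 v).
Proof.
  unfold diagU, diagW; rewrite cos_PI2, sin_PI2, cos_0, sin_0; f_equal; ring.
Qed.

Lemma rotated_vertex_dot (t : R) (sx sy sz : bool) (v : vec3) :
  vz v = 0 ->
  Rabs (dot3 (rotz t (vs sx sy sz)) v) =
    if Bool.eqb sx sy then Rabs (diagU t v) else Rabs (diagW t v).
Proof.
  intros Hz; unfold dot3, rotz, vs, sgn, diagU, diagW, vx, vy, vz in *; simpl.
  rewrite Hz.
  destruct sx, sy; simpl;
    first [f_equal; ring | rewrite <- Rabs_Ropp; f_equal; ring].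
Qed.

Lemma continuous_swap_meet (g h : R -> R) (lo hi : R) :
  continuity g -> continuity h -> lo <= hi ->
  g hi = h lo -> h hi = g lo ->
  exists t, lo <= t <= hi /\ g t = h t.
Proof.
  intros Hg Hh Hle Hgh Hhg.
  destruct (IVT_cor (fun t => g t - h t) lo hi (continuity_minus g h Hg Hh) Hle)
    as [t [Ht Hzero]].
  - rewrite Hgh, Hhg; pose proof (pow2_ge_0 (g lo - h lo)); nra.
  - exists t; split; [exact Ht | lra].
Qed.

Theorem mainTheorem9 (n : nat) (p : nat -> R) (a : nat -> vec3) :
  (forall i, (i < n)%nat -> 0 <= p i) ->
  (forall i, (i < n)%nat -> dot3 (a i) (a i) = 1) ->
  fsum n p = 2 ->
  fsum n (fun i => p i * vx (a i)) = 0 ->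
  fsum n (fun i => p i * vy (a i)) = 0 ->
  fsum n (fun i => p i * vz (a i)) = 0 ->
  (* coordinates chosen so that the common plane of the a_i is z = 0 *)
  (forall i, (i < n)%nat -> vz (a i) = 0) ->
  exists t : R, 0 <= t <= PI / 2 /\
    forall sx sy sz : bool, fTheta n p a (rotz t (vs sx sy sz)) <= 1.
Proof.
  intros Hp Hunit Hmass Hx Hy Hz Hplane.
  set (A := fun t => fsum n (fun i => p i * Rabs (diagU t (a i)))).
  set (B := fun t => fsum n (fun i => p i * Rabs (diagW t (a i)))).
  destruct (continuous_swap_meet A B 0 (PI / 2)) as [t [Ht HAB]].
  - apply fsum_continuous; intros i; unfold diagU; reg.
  - apply fsum_continuous; intros i; unfold diagW; reg.
  - pose proof PI_RGT_0; lra.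
  - apply fsum_ext; intros i _; rewrite diagU_PI2; reflexivity.
  - apply fsum_ext; intros i _; rewrite diagW_PI2; reflexivity.
  - assert (Hsum : A t + B t <= 4).
    { unfold A, B; rewrite <- fsum_plus.
      replace 4 with (2 * fsum n p) by lra; rewrite <- fsum_scal.
      apply fsum_le; intros i Hi.
      pose proof (diag_abs_sum_le t (a i) (Hplane i Hi) (Hunit i Hi)).
      pose proof (Hp i Hi); nra. }
    exists t; split; [exact Ht|]; intros sx sy sz.
    rewrite fTheta_balanced by assumption.
    rewrite (fsum_ext n _ (fun i => if Bool.eqb sx sy
        then p i * Rabs (diagU t (a i)) else p i * Rabs (diagW t (a i))))
      by (intros i Hi; rewrite rotated_vertex_dot by auto; destruct (Bool.eqb sx sy); reflexivity).
    destruct (Bool.eqb sx sy); fold (A t) (B t); lra.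
Qed.
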